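(* Let $M$ be a Turing machine (bi-infinite tape, symbols $\{0,1,3\}$ with $0$ blank, states $\{0,\dots,|Q|-1\}$) computing a function $f:\Sigma^*\to\Sigma^*$, $\Sigma=\{1,3\}$, in time $T(\ell(\omega))$ on input $\omega$. One can construct a function $\tilde f:\mathbb N\times\mathbb R\to\mathbb R$ in $\mathbb{LDL}^\circ$ such that, for every input $\omega$, $\tilde f(2^{T(\ell(\omega))},\gamma_{word}(\omega))$ provides $f(\omega)$ with respect to the encoding $\gamma_{word}$, i.e. equals $\gamma_{word}(f(\omega))$.
   Context: For a word $w=w_0w_1\dots$ over $\{0,1,3\}$, $\gamma_{word}(w)=\sum_{i\ge0}w_i4^{-(i+1)}$. The input $\omega$ is initially written to the right of the head (left part blank) in the initial state, and the output is read as the tape content to the right of the head; halting configurations are fixed points of the step function. $\ell$ denotes length. $\overline{\mathrm{sg}}:\mathbb R\to\mathbb R$ is a fixed continuous piecewise affine function equal to $1$ for $x>3/4$ and $0$ for $x<1/4$. An $\overline{\mathrm{sg}}$-polynomial expression is built from $+,-,\times,\overline{\mathrm{sg}}$ over variables and integer constants; $\deg(x,x)=1$, $\deg(x,x')=0$ for other variables/constants, $\deg(x,P+Q)=\max$, $\deg(x,P\times Q)=$ sum, $\deg(x,\overline{\mathrm{sg}}(P))=0$; $\mathbf u$ is essentially linear in $\mathbf f$ if $\mathbf u=\mathbf A\cdot\mathbf f+\mathbf B$ with $\mathbf A,\mathbf B$ $\overline{\mathrm{sg}}$-polynomial expressions of degree $0$ in $\mathbf f$. Linear length ODE schema: $\mathbf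 f(0,\mathbf y)=\mathbf g(\mathbf y)$, $\mathbf f(x+1,\mathbf y)=\mathbf f(x,\mathbf y)+(\ell(x+1)-\ell(x))\,\mathbf u(\mathbf f(x,\mathbf y),\mathbf h(x,\mathbf y),x,\mathbf y)$ with $\mathbf u$ essentially linear in $\mathbf f(x,\mathbf y)$, where $\ell:\mathbb N\to\mathbb N$ is binary length. $\mathbb{LDL}^\circ$: smallest class of functions (arguments/values in $\mathbb N,\mathbb Z,\mathbb Q,\mathbb R$, composition partial) containing $0,1$, projections, $\ell$, $+,-,\times$ (over the reals), $\overline{\mathrm{sg}}$, $x\mapsto x/2$, closed under composition and linear length ODE. *)

From Stdlib Require Import Reals List ZArith Arith Lia.
Import ListNotations.
Open Scope R_scope.

Definition piecewise_affine (s : R -> R) : Prop :=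
  exists bs : list R, forall x y, x <= y ->
    (forall b, In b bs -> ~ (x < b < y)) ->
    exists a c, forall z, x <= z <= y -> s z = a * z + c.

Definition IsSgBar (s : R -> R) : Prop :=
  continuity s /\ piecewise_affine s /\
  (forall x, 3/4 < x -> s x = 1) /\ (forall x, x < 1/4 -> s x = 0).

(* binary length on N : l(x) = floor(log2 x) + 1, l(0) = 1 *)
Definition blen (n : nat) : nat := S (Nat.log2 n).

Definition to_nat_opt (x : R) : option nat :=
  let N := Z.to_nat (Int_part x) in
  if Req_EM_T x (INR N) then Some N else None.

Inductive sexp (V : Type) : Type :=
| SVar : V -> sexp V
| SConst : Z -> sexp V
| SAdd : sexp V -> sexp V -> sexp V
| SSub : sexp V -> sexp V -> sexp V
| SMul : sexp V -> sexp V -> sexp V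
| SSg : sexp V -> sexp V.
Arguments SVar {V}. Arguments SConst {V}. Arguments SAdd {V}.
Arguments SSub {V}. Arguments SMul {V}. Arguments SSg {V}.

Fixpoint seval {V} (sg : R -> R) (env : V -> R) (e : sexp V) : R :=
  match e with
  | SVar v => env v
  | SConst z => IZR z
  | SAdd a b => seval sg env a + seval sg env b
  | SSub a b => seval sg env a - seval sg env b
  | SMul a b => seval sg env a * seval sg env b
  | SSg a => sg (seval sg env a)
  end.

Fixpoint sdeg {V} (P : V -> bool) (e : sexp V) : nat :=
  match e with
  | SVar v => if P v then 1%nat else 0%nat
  | SConst _ => 0%nat
  | SAdd a b | SSub a b => Nat.max (sdeg P a) (sdeg P b)
  | SMul a b => (sdeg P a + sdeg P b)%nat
  | SSg _ => 0%nat
  end.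

(* variables of u : components of f(x,y), of h(x,y), x, components of y *)
Inductive uvar : Type := UF (j : nat) | UH (j : nat) | UX | UY (j : nat).
Definition isF (v : uvar) : bool := match v with UF _ => true | _ => false end.

Definition pfun := list R -> option R.
Definition pdflt : pfun := fun _ => None.

Fixpoint opt_all (l : list (option R)) : option (list R) :=
  match l with
  | [] => Some []
  | Some a :: l' => match opt_all l' with Some v => Some (a :: v) | None => None end
  | None :: _ => None
  end.

Definition cst_fun (n : nat) (c : R) : pfun :=
  fun xs => if Nat.eqb (length xs) n then Some c else None.
Definition proj_fun (n i : nat) : pfun :=
  fun xs => if Nat.eqb (length xs) n then Some (nth i xs 0) else None.
Definition un_fun (f : R -> R) : pfun :=
  fun xs => match xs with [x] => Some (f x) | _ => None end.
Definition bin_fun (f : R -> R -> R) : pfun :=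
  fun xs => match xs with [x; y] => Some (f x y) | _ => None end.
Definition len_fun : pfun :=
  fun xs => match xs with
            | [x] => match to_nat_opt x with
                     | Some N => Some (INR (blen N)) | None => None end
            | _ => None end.
Definition comp_fun (F : pfun) (G : list pfun) : pfun :=
  fun xs => match opt_all (map (fun g => g xs) G) with
            | Some ys => F ys | None => None end.

Definition rsum (l : list R) : R := fold_right Rplus 0 l.

(* one step of the linear length ODE, with u = A . f + B *)
Definition ode_step (sg : R -> R) (m : nat) (A : list (list (sexp uvar)))
  (B : list (sexp uvar)) (fv hv : list R) (N : nat) (ys : list R) : list R :=
  let env (v : uvar) : R :=
    match v with
    | UF j => nth j fv 0 | UH j => nth j hv 0
    | UX => INR N | UY j => nth j ys 0 end in
  map (fun i =>
         nth i fv 0 + (INR (blen (S N)) - INR (blen N)) *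
           (rsum (map (fun j => seval sg env (nth j (nth i A []) (SConst 0%Z)) * nth j fv 0)
                      (seq 0 m))
            + seval sg env (nth i B (SConst 0%Z))))
      (seq 0 m).

Fixpoint ode_iter (sg : R -> R) (m : nat) (g h : list pfun)
  (A : list (list (sexp uvar))) (B : list (sexp uvar)) (N : nat) (ys : list R)
  : option (list R) :=
  match N with
  | O => opt_all (map (fun gi => gi ys) g)
  | S N' =>
      match ode_iter sg m g h A B N' ys, opt_all (map (fun hj => hj (INR N' :: ys)) h) with
      | Some fv, Some hv => Some (ode_step sg m A B fv hv N' ys)
      | _, _ => None
      end
  end.

Definition ode_fun (sg : R -> R) (n m : nat) (g h : list pfun)
  (A : list (list (sexp uvar))) (B : list (sexp uvar)) (i : nat) : pfun :=
  fun xs => match xs with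
            | x :: ys =>
                if Nat.eqb (length ys) n then
                  match to_nat_opt x with
                  | Some N => option_map (fun v => nth i v 0) (ode_iter sg m g h A B N ys)
                  | None => None
                  end
                else None
            | [] => None
            end.

Inductive LDL (sg : R -> R) : nat -> pfun -> Prop :=
| LDL_zero n : LDL sg n (cst_fun n 0)
| LDL_one n : LDL sg n (cst_fun n 1)
| LDL_proj n i : (i < n)%nat -> LDL sg n (proj_fun n i)
| LDL_len : LDL sg 1 len_fun
| LDL_add : LDL sg 2 (bin_fun Rplus)
| LDL_sub : LDL sg 2 (bin_fun Rminus)
| LDL_mul : LDL sg 2 (bin_fun Rmult)
| LDL_sg : LDL sg 1 (un_fun sg)
| LDL_half : LDL sg 1 (un_fun (fun x => x / 2))
| LDL_comp n k (F : pfun) (G : list pfun) :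
    LDL sg k F -> length G = k ->
    (forall j, (j < k)%nat -> LDL sg n (nth j G pdflt)) ->
    LDL sg n (comp_fun F G)
| LDL_ode n m k (g h : list pfun) (A : list (list (sexp uvar))) (B : list (sexp uvar)) :
    length g = m -> (forall j, (j < m)%nat -> LDL sg n (nth j g pdflt)) ->
    length h = k -> (forall j, (j < k)%nat -> LDL sg (S n) (nth j h pdflt)) ->
    length A = m -> (forall r, In r A -> length r = m) -> length B = m ->
    (forall r e, In r A -> In e r -> sdeg isF e = 0%nat) ->
    (forall e, In e B -> sdeg isF e = 0%nat) ->
    forall i, (i < m)%nat -> LDL sg (S n) (ode_fun sg n m g h A B i).

Inductive sym : Type := B0 | S1 | S3.
Definition symval (a : sym) : R := match a with B0 => 0 | S1 => 1 | S3 => 3 end.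
Inductive sig13 : Type := A1 | A3.
Definition inj13 (a : sig13) : sym := match a with A1 => S1 | A3 => S3 end.

Inductive move : Type := MLeft | MRight | MStay.

Record TM : Type := {
  nQ : nat;
  q0 : nat;
  delta : nat -> sym -> nat * sym * move;
  q0_ok : (q0 < nQ)%nat;
  delta_ok : forall q a, (q < nQ)%nat -> (fst (fst (delta q a)) < nQ)%nat
}.

(* configuration: state, left part (nearest cell first),
   right part (cell under the head first) *)
Record config : Type := Cfg { cstate : nat; cleft : nat -> sym; cright : nat -> sym }.

Definition scons (a : sym) (t : nat -> sym) : nat -> sym :=
  fun n => match n with O => a | S n' => t n' end.
Definition stail (t : nat -> sym) : nat -> sym := fun n => t (S n).

Definition step (M : TM) (c : config) : config :=
  match delta M (cstate c) (cright c 0%nat) with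
  | (q', a', MRight) => Cfg q' (scons a' (cleft c)) (stail (cright c))
  | (q', a', MLeft) => Cfg q' (stail (cleft c)) (scons (cleft c 0%nat) (scons a' (stail (cright c))))
  | (q', a', MStay) => Cfg q' (cleft c) (scons a' (stail (cright c)))
  end.

Definition tape_of (w : list sym) : nat -> sym := fun n => nth n w B0.

Definition init_config (M : TM) (w : list sig13) : config :=
  Cfg (q0 M) (fun _ => B0) (tape_of (map inj13 w)).

(* M computes f in time T(l(w)): after T(|w|) steps the configuration is a
   halting one (fixed point of step) and the right part is f(w). *)
Definition computes_in_time (M : TM) (f : list sig13 -> list sig13) (T : nat -> nat) : Prop :=
  forall w : list sig13,
    let c := Nat.iter (T (length w)) (step M) (init_config M w) in
    step M c = c /\ cright c = tape_of (map inj13 (f w)).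

Definition gamma_word (w : list sym) : R :=
  rsum (map (fun i => symval (nth i w B0) * / 4 ^ (S i)) (seq 0 (length w))).

From Stdlib Require Import Reals List ZArith Lia Lra.
Import ListNotations.
Open Scope R_scope.

(* The linear length ODE performs one machine step exactly when its increment
   ℓ(x+1) - ℓ(x) is 1, i.e. when x+1 is a power of two, so at x = 2^T it has
   performed T steps.  The configuration lives in four registers: the state, the
   left part of the tape and the already visited prefix of the right part in base
   8 with nonzero digits 2, 4, 6, and the whole right part in base 4, which is
   gamma_word of the output at the end.  The state and the two symbols next to
   the head are read off by sg-bar applied to affine expressions that stay at
   distance >= 1/4 from the interval where sg-bar is not locally constant.  A
   machine step pushes and pops digits, so each register changes by an affine
   map whose coefficients are sg-bar-expressions of these readings: exactly the
   essentially linear shape the schema requires. *)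

(** * Encodings of words *)

Lemma to_nat_opt_INR (n : nat) : to_nat_opt (INR n) = Some n.
Proof.
  unfold to_nat_opt; rewrite Int_part_INR, Nat2Z.id.
  now destruct (Req_EM_T (INR n) (INR n)).
Qed.

Fixpoint gamma4 (l : list sym) : R :=
  match l with [] => 0 | a :: l' => (symval a + gamma4 l') / 4 end.

Lemma rsum_map_scal (c : R) (F : nat -> R) (l : list nat) :
  rsum (map (fun i => c * F i) l) = c * rsum (map F l).
Proof. unfold rsum; induction l as [|i l IH]; cbn; [ring|]. rewrite IH; ring. Qed.

Lemma gamma_word_gamma4 (l : list sym) : gamma_word l = gamma4 l.
Proof.
  unfold gamma_word; induction l as [|a l IH]; [reflexivity|].
  cbn [length seq map rsum fold_right gamma4 nth].
  rewrite <- IH, <- seq_shift, map_map.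
  rewrite map_ext with (g := fun i => / 4 * (symval (nth i l B0) * / 4 ^ S i)).
  - rewrite rsum_map_scal; cbn; field.
  - intro i; cbn [pow]; rewrite Rinv_mult; ring.
Qed.

Lemma gamma4_blank (l : list sym) : (forall n, nth n l B0 = B0) -> gamma4 l = 0.
Proof.
  induction l as [|a l IH]; intros Hl; cbn; [reflexivity|].
  specialize (Hl 0%nat) as Ha; cbn in Ha; subst a.
  rewrite IH; [cbn; lra|]. intros n; exact (Hl (S n)).
Qed.

Lemma gamma4_nth_ext (l1 l2 : list sym) :
  (forall n, nth n l1 B0 = nth n l2 B0) -> gamma4 l1 = gamma4 l2.
Proof.
  revert l2; induction l1 as [|a l1 IH]; intros [|b l2] Hl.
  - reflexivity.
  - symmetry; apply gamma4_blank; intros n; rewrite <- Hl; now destruct n.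
  - apply gamma4_blank; intros n; rewrite Hl; now destruct n.
  - specialize (Hl 0%nat) as Hab; cbn in Hab; subst b; cbn.
    rewrite (IH l2); [reflexivity|]. intros n; exact (Hl (S n)).
Qed.

Lemma gamma4_tl (l : list sym) : gamma4 (tl l) = 4 * gamma4 l - symval (hd B0 l).
Proof. destruct l; cbn; field. Qed.

Lemma gamma4_input_bounds (s : list sig13) : 0 <= gamma4 (map inj13 s) < 1.
Proof. induction s as [|[] s IH]; cbn; lra. Qed.

(* Ranks 1, 2, 3 instead of the digits 0, 1, 3 make a blank cell
   distinguishable from the end of the word. *)
Definition rank (a : sym) : nat := match a with B0 => 1 | S1 => 2 | S3 => 3 end.
Definition code8 (a : sym) : R := 2 * INR (rank a).

Fixpoint encode8 (l : list sym) : R :=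
  match l with [] => 0 | a :: l' => (code8 a + encode8 l') / 8 end.

Definition rank8 (l : list sym) : nat := match l with [] => 0 | a :: _ => rank a end.

Lemma rank8_le (l : list sym) : (rank8 l <= 3)%nat.
Proof. destruct l as [|[] l]; cbn; lia. Qed.

Lemma encode8_bounds (l : list sym) : 0 <= encode8 l <= 6 / 7.
Proof. induction l as [|[] l IH]; cbn; unfold code8; cbn; lra. Qed.

Lemma encode8_window (l : list sym) :
  14 * INR (rank8 l) <= 56 * encode8 l <= 14 * INR (rank8 l) + 6.
Proof.
  destruct l as [|a l]; cbn; [lra|].
  pose proof (encode8_bounds l); unfold code8; lra.
Qed.

Lemma encode8_tl (l : list sym) : encode8 (tl l) = 8 * encode8 l - 2 * INR (rank8 l).
Proof. destruct l; cbn; unfold code8; [lra|field]. Qed.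

(** * Configurations as lists *)

Record lcfg : Type := LCfg {
  lstate : nat; lleft : list sym; lvisited : list sym; linput : list sig13 }.

Definition lright (x : lcfg) : list sym := lvisited x ++ map inj13 (linput x).

Definition input_after_pop (x : lcfg) : list sig13 :=
  match lvisited x with [] => tl (linput x) | _ => linput x end.

Lemma lright_tl (x : lcfg) :
  tl (lright x) = tl (lvisited x) ++ map inj13 (input_after_pop x).
Proof.
  unfold lright, input_after_pop; destruct (lvisited x); [|reflexivity].
  now destruct (linput x).
Qed.

Definition lstep (M : TM) (x : lcfg) : lcfg :=
  let '(q', a', mv) := delta M (lstate x) (hd B0 (lright x)) in
  let p := tl (lvisited x) in
  let s := input_after_pop x in
  match mv with
  | MRight => LCfg q' (a' :: lleft x) p s
  | MLeft => LCfg q' (tl (lleft x)) (hd B0 (lleft x) :: a' :: p) s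
  | MStay => LCfg q' (lleft x) (a' :: p) s
  end.

Definition represents (c : config) (x : lcfg) : Prop :=
  cstate c = lstate x /\ (forall n, cleft c n = nth n (lleft x) B0) /\
  (forall n, cright c n = nth n (lright x) B0).

Lemma nth_tl {A : Type} (n : nat) (l : list A) (d : A) : nth n (tl l) d = nth (S n) l d.
Proof. destruct l; [destruct n|]; reflexivity. Qed.

Lemma nth_O_hd {A : Type} (l : list A) (d : A) : nth 0 l d = hd d l.
Proof. now destruct l. Qed.

Lemma hd_app {A : Type} (d : A) (l r : list A) : hd d (l ++ r) = hd (hd d r) l.
Proof. now destruct l. Qed.

Lemma step_represents (M : TM) (c : config) (x : lcfg) :
  represents c x -> represents (step M c) (lstep M x).
Proof.
  intros (Hq & HL & HR); unfold step, lstep.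
  assert (Htail : forall n,
            stail (cright c) n = nth n (tl (lvisited x) ++ map inj13 (input_after_pop x)) B0)
    by (intro n; unfold stail; rewrite HR, <- nth_tl, lright_tl; reflexivity).
  rewrite Hq, (HR 0%nat), nth_O_hd.
  destruct (delta M (lstate x) (hd B0 (lright x))) as [[q' a'] []];
    split; try reflexivity; cbn [cleft cright lleft lright lvisited linput].
  - split; intros n.
    + unfold stail; rewrite HL, nth_tl; reflexivity.
    + destruct n as [|[|n]]; cbn; [rewrite HL, nth_O_hd|reflexivity|]; auto.
  - split; [intros [|n]; [reflexivity|apply HL]|exact Htail].
  - split; [exact HL|intros [|n]; [reflexivity|apply Htail]].
Qed.

Lemma lstep_state_lt (M : TM) (x : lcfg) :
  (lstate x < nQ M)%nat -> (lstate (lstep M x) < nQ M)%nat.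
Proof.
  intros Hq; unfold lstep.
  pose proof (delta_ok M (lstate x) (hd B0 (lright x)) Hq) as Hok.
  destruct (delta M (lstate x) (hd B0 (lright x))) as [[q' a'] []]; exact Hok.
Qed.

(** * The linear length ODE *)

Definition reg (j : nat) : sexp uvar := SVar (UF j).
Definition aux (j : nat) : sexp uvar := SVar (UH j).
Definition num (z : Z) : sexp uvar := SConst z.

(* By [encode8_window] the argument is >= 8 when [m <= rank8 l] and <= 0 otherwise. *)
Definition code_at_least (j m : nat) : sexp uvar :=
  SSg (SAdd (SSub (SMul (num 56) (reg j)) (SMul (num 14) (num (Z.of_nat m)))) (num 8)).

Definition lead_code (j : nat) : sexp uvar :=
  SMul (num 2) (SAdd (code_at_least j 1) (SAdd (code_at_least j 2) (code_at_least j 3))).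

(* The flags [nonblank] and [is3] describe the symbol to report when the word
   held by register [j] is empty. *)
Definition head_is (j : nat) (nonblank is3 : sexp uvar) (b : sym) : sexp uvar :=
  let k := code_at_least j in
  let empty := SSub (num 1) (k 1%nat) in
  match b with
  | B0 => SAdd (SSub (k 1%nat) (k 2%nat)) (SMul empty (SSub (num 1) nonblank))
  | S1 => SAdd (SSub (k 2%nat) (k 3%nat)) (SMul empty (SSub nonblank is3))
  | S3 => SAdd (k 3%nat) (SMul empty is3)
  end.

Definition input_nonblank : sexp uvar := SSg (SSub (SMul (num 8) (reg 3)) (num 1)).
Definition input_is3 : sexp uvar := SSg (SSub (SMul (num 4) (reg 3)) (num 2)).

Definition left_is : sym -> sexp uvar := head_is 1 (num 0) (num 0).
Definition right_is : sym -> sexp uvar := head_is 2 input_nonblank input_is3.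

Definition state_is (i : nat) : sexp uvar :=
  let d := SSub (reg 0) (num (Z.of_nat i)) in
  SMul (SSg (SAdd (SMul (num 2) d) (num 1))) (SSg (SSub (num 1) (SMul (num 2) d))).

Definition select {X : Type} (test F : X -> sexp uvar) (xs : list X) : sexp uvar :=
  fold_right (fun x e => SAdd (SMul (test x) (F x)) e) (num 0) xs.

Definition all_syms : list sym := [B0; S1; S3].

Lemma all_syms_NoDup : NoDup all_syms.
Proof. repeat constructor; cbn; intuition discriminate. Qed.

Lemma in_all_syms (a : sym) : In a all_syms.
Proof. destruct a; cbn; auto. Qed.

Definition sym_reading (test : sym -> sexp uvar) (v : sym -> Z) : sexp uvar :=
  select test (fun b => num (v b)) all_syms.

Definition nonblank_flag (a : sym) : R := match a with B0 => 0 | _ => 1 end.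
Definition is3_flag (a : sym) : R := match a with S3 => 1 | _ => 0 end.

Record affine : Type := Aff { slope : sexp uvar; offset : sexp uvar }.

Definition aff_id : affine := Aff (num 1) (num 0).
Definition aff_comp (g f : affine) : affine :=
  Aff (SMul (slope g) (slope f)) (SAdd (SMul (slope g) (offset f)) (offset g)).

(* The auxiliary functions h supply [aux 0 = 1/8] and [aux 1 = 1/4]. *)
Definition push8 (e : sexp uvar) : affine := Aff (aux 0) (SMul e (aux 0)).
Definition pop8 (e : sexp uvar) : affine := Aff (num 8) (SSub (num 0) e).
Definition push4 (e : sexp uvar) : affine := Aff (aux 1) (SMul e (aux 1)).
Definition pop4 (e : sexp uvar) : affine := Aff (num 4) (SSub (num 0) e).

Definition symZ (a : sym) : Z := match a with B0 => 0 | S1 => 1 | S3 => 3 end.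
Definition code8Z (a : sym) : Z := 2 * Z.of_nat (rank a).

Definition update (t : nat * sym * move) (i : nat) : affine :=
  let '(q', a', mv) := t in
  let left8 := sym_reading left_is code8Z in
  let left4 := sym_reading left_is symZ in
  let head4 := sym_reading right_is symZ in
  match i, mv with
  | 0, _ => Aff (num 0) (num (Z.of_nat q'))
  | 1, MRight => push8 (num (code8Z a'))
  | 1, MLeft => pop8 (lead_code 1)
  | 2, MRight => pop8 (lead_code 2)
  | 2, MLeft => aff_comp (push8 left8) (aff_comp (push8 (num (code8Z a'))) (pop8 (lead_code 2)))
  | 2, MStay => aff_comp (push8 (num (code8Z a'))) (pop8 (lead_code 2))
  | 3, MRight => pop4 head4
  | 3, MLeft => aff_comp (push4 left4) (aff_comp (push4 (num (symZ a'))) (pop4 head4))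
  | 3, MStay => aff_comp (push4 (num (symZ a'))) (pop4 head4)
  | _, _ => aff_id
  end.

Definition regs (x : lcfg) : list R :=
  [INR (lstate x); encode8 (lleft x); encode8 (lvisited x); gamma4 (lright x)].

Definition aux_vals : list R := [/ 8; / 4].

Definition by_transition (M : TM) (E : nat * sym * move -> sexp uvar) : sexp uvar :=
  select state_is (fun q => select right_is (fun a => E (delta M q a)) all_syms) (seq 0 (nQ M)).

Definition trans_aff (M : TM) (i : nat) : affine :=
  Aff (by_transition M (fun t => slope (update t i)))
      (by_transition M (fun t => offset (update t i))).

Definition diag4 (d : nat -> sexp uvar) : list (list (sexp uvar)) :=
  [[d 0%nat; num 0; num 0; num 0]; [num 0; d 1%nat; num 0; num 0];
   [num 0; num 0; d 2%nat; num 0]; [num 0; num 0; num 0; d 3%nat]].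

(* The ODE adds [u = A f + B] to [f], hence the [- 1] on the diagonal. *)
Definition Amat (M : TM) : list (list (sexp uvar)) :=
  diag4 (fun i => SSub (slope (trans_aff M i)) (num 1)).
Definition Bvec (M : TM) : list (sexp uvar) :=
  map (fun i => offset (trans_aff M i)) [0; 1; 2; 3]%nat.

Fixpoint nat_const (k : nat) : pfun :=
  match k with
  | O => cst_fun 1 0
  | S k' => comp_fun (bin_fun Rplus) [nat_const k'; cst_fun 1 1]
  end.

Fixpoint inv_pow2 (k : nat) : pfun :=
  match k with
  | O => cst_fun 2 1
  | S k' => comp_fun (un_fun (fun x => x / 2)) [inv_pow2 k']
  end.

Definition init_funs (M : TM) : list pfun :=
  [nat_const (q0 M); cst_fun 1 0; cst_fun 1 0; proj_fun 1 0].
Definition aux_funs : list pfun := [inv_pow2 3; inv_pow2 2].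

Definition simulator (sg : R -> R) (M : TM) : pfun :=
  ode_fun sg 1 4 (init_funs M) aux_funs (Amat M) (Bvec M) 3.

Definition ode_env (fv hv : list R) (N : nat) (ys : list R) : uvar -> R :=
  fun v => match v with
           | UF j => nth j fv 0 | UH j => nth j hv 0
           | UX => INR N | UY j => nth j ys 0 end.

Definition blen_incr (N : nat) : R := INR (blen (S N)) - INR (blen N).

Lemma blen_incr_cases (N : nat) :
  (Nat.log2 (S N) = S (Nat.log2 N) /\ blen_incr N = 1) \/
  (Nat.log2 (S N) = Nat.log2 N /\ blen_incr N = 0).
Proof.
  unfold blen_incr, blen.
  destruct (Nat.log2_succ_or N) as [E|E]; rewrite E; [left|right];
    split; try reflexivity; rewrite ?S_INR; ring.
Qed.

Lemma nat_const_eval (k : nat) (y : R) : nat_const k [y] = Some (INR k).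
Proof.
  induction k as [|k IH]; [reflexivity|].
  cbn [nat_const]; unfold comp_fun; cbn [map]; rewrite IH, S_INR; reflexivity.
Qed.

Lemma inv_pow2_eval (k : nat) (x y : R) : inv_pow2 k [x; y] = Some (/ 2 ^ k).
Proof.
  induction k as [|k IH]; [cbn; f_equal; field|].
  cbn [inv_pow2]; unfold comp_fun; cbn [map]; rewrite IH; cbn; f_equal.
  field; apply pow_nonzero; lra.
Qed.

Lemma aux_funs_eval (x y : R) : opt_all (map (fun h => h [x; y]) aux_funs) = Some aux_vals.
Proof.
  cbn [aux_funs map]; rewrite !inv_pow2_eval; unfold aux_vals; cbn.
  repeat f_equal; field.
Qed.

(** * Evaluation of the sg-bar-expressions *)

Section Evaluation.

Variable sg : R -> R.
Hypothesis sg_one : forall x, 3/4 < x -> sg x = 1.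
Hypothesis sg_zero : forall x, x < 1/4 -> sg x = 0.

Definition detects (env : uvar -> R) {X : Type} (test : X -> sexp uvar) (x0 : X) : Prop :=
  seval sg env (test x0) = 1 /\ forall x, x <> x0 -> seval sg env (test x) = 0.

Lemma code_at_least_eval (env : uvar -> R) (j m : nat) (l : list sym) :
  env (UF j) = encode8 l ->
  seval sg env (code_at_least j m) = if (m <=? rank8 l)%nat then 1 else 0.
Proof.
  intros Hj; unfold code_at_least, reg, num; cbn [seval].
  rewrite Hj, <- INR_IZR_INZ.
  pose proof (encode8_window l).
  destruct (Nat.leb_spec m (rank8 l)) as [Hm|Hm].
  - apply le_INR in Hm; apply sg_one; lra.
  - apply le_INR in Hm; rewrite S_INR in Hm; apply sg_zero; lra.
Qed.

Lemma lead_code_eval (env : uvar -> R) (j : nat) (l : list sym) :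
  env (UF j) = encode8 l -> seval sg env (lead_code j) = 2 * INR (rank8 l).
Proof.
  intros Hj; unfold lead_code, num; cbn [seval].
  rewrite !(code_at_least_eval env j _ l Hj).
  pose proof (rank8_le l).
  destruct (rank8 l) as [|[|[|[|r]]]]; cbn; lra || lia.
Qed.

Lemma head_is_detects (env : uvar -> R) (j : nat) (nonblank is3 : sexp uvar)
  (l : list sym) (c : sym) :
  env (UF j) = encode8 l ->
  (l = [] -> seval sg env nonblank = nonblank_flag c /\ seval sg env is3 = is3_flag c) ->
  detects env (head_is j nonblank is3) (hd c l).
Proof.
  intros Hj Hempty; unfold detects.
  assert (Hk : forall m,
             seval sg env (code_at_least j m) = if (m <=? rank8 l)%nat then 1 else 0)
    by (intro m; exact (code_at_least_eval env j m l Hj)).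
  destruct l as [|a l]; cbn [rank8 hd] in *.
  - destruct (Hempty eq_refl) as [Hn H3].
    split; [destruct c|intros [] Hb; destruct c];
      cbn [head_is seval num]; rewrite ?Hk, ?Hn, ?H3; cbn; lra || congruence.
  - split; [destruct a|intros [] Hb; destruct a];
      cbn [head_is seval num]; rewrite ?Hk; cbn; lra || congruence.
Qed.

Lemma input_flags (env : uvar -> R) (s : list sig13) :
  env (UF 3) = gamma4 (map inj13 s) ->
  seval sg env input_nonblank = nonblank_flag (hd B0 (map inj13 s)) /\
  seval sg env input_is3 = is3_flag (hd B0 (map inj13 s)).
Proof.
  intros H3; unfold input_nonblank, input_is3, reg, num; cbn [seval]; rewrite H3.
  destruct s as [|a s]; cbn.
  - rewrite !sg_zero by lra; split; reflexivity.
  - pose proof (gamma4_input_bounds s).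
    destruct a; cbn; [rewrite sg_one, sg_zero by lra|rewrite !sg_one by lra];
      split; reflexivity.
Qed.

Lemma state_is_detects (env : uvar -> R) (q : nat) :
  env (UF 0) = INR q -> detects env state_is q.
Proof.
  intros H0; unfold detects, state_is, reg, num; cbn [seval]; rewrite H0.
  split.
  - rewrite <- INR_IZR_INZ, !sg_one by lra; ring.
  - intros i Hi; rewrite <- INR_IZR_INZ.
    destruct (Nat.lt_gt_cases i q) as [[Hlt|Hgt] _]; [exact Hi| |];
      apply le_INR in Hlt || apply le_INR in Hgt; rewrite S_INR in *.
    + rewrite (sg_zero (1 - _)) by lra; ring.
    + rewrite (sg_zero (2 * _ + 1)) by lra; ring.
Qed.

Lemma select_eval_zero (env : uvar -> R) {X : Type} (test F : X -> sexp uvar) (xs : list X) :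
  (forall x, In x xs -> seval sg env (test x) = 0) -> seval sg env (select test F xs) = 0.
Proof.
  induction xs as [|x xs IH]; intros Hz; [reflexivity|].
  cbn [select fold_right seval]; fold (select test F xs).
  rewrite Hz, IH; [ring|intros y Hy; apply Hz; now right|now left].
Qed.

Lemma select_eval (env : uvar -> R) {X : Type} (test F : X -> sexp uvar)
  (xs : list X) (x0 : X) :
  NoDup xs -> In x0 xs -> detects env test x0 ->
  seval sg env (select test F xs) = seval sg env (F x0).
Proof.
  intros Hnd Hin [H1 H0]; induction Hnd as [|x xs Hx Hnd IH]; [destruct Hin|].
  cbn [select fold_right seval] in *; fold (select test F xs).
  destruct Hin as [<-|Hin].
  - rewrite H1, select_eval_zero; [ring|].
    intros y Hy; apply H0; intros ->; contradiction.
  - rewrite H0, IH by (auto; intros ->; contradiction); ring.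
Qed.

Lemma sym_reading_eval (env : uvar -> R) (test : sym -> sexp uvar) (v : sym -> Z) (a : sym) :
  detects env test a -> seval sg env (sym_reading test v) = IZR (v a).
Proof.
  intros Ha; unfold sym_reading.
  rewrite (select_eval env _ _ _ a all_syms_NoDup (in_all_syms a) Ha).
  reflexivity.
Qed.

Lemma regs_readings (env : uvar -> R) (x : lcfg) :
  (forall j, env (UF j) = nth j (regs x) 0) ->
  detects env state_is (lstate x) /\ detects env left_is (hd B0 (lleft x)) /\
  detects env right_is (hd B0 (lright x)).
Proof.
  intros Henv; split; [|split].
  - apply state_is_detects, (Henv 0%nat).
  - apply head_is_detects; [exact (Henv 1%nat)|intros _; split; reflexivity].
  - unfold lright; rewrite hd_app.
    apply head_is_detects; [exact (Henv 2%nat)|intros Hp; apply input_flags].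
    rewrite (Henv 3%nat); cbn; unfold lright; rewrite Hp; reflexivity.
Qed.

Lemma by_transition_eval (env : uvar -> R) (M : TM) (q : nat) (a : sym)
  (E : nat * sym * move -> sexp uvar) :
  detects env state_is q -> (q < nQ M)%nat -> detects env right_is a ->
  seval sg env (by_transition M E) = seval sg env (E (delta M q a)).
Proof.
  intros Hq Hlt Ha; unfold by_transition.
  rewrite (select_eval env _ _ _ q), (select_eval env _ _ _ a);
    auto using all_syms_NoDup, in_all_syms, seq_NoDup.
  apply in_seq; lia.
Qed.

Definition aff_eval (env : uvar -> R) (f : affine) (x : R) : R :=
  seval sg env (slope f) * x + seval sg env (offset f).

Lemma aff_eval_comp (env : uvar -> R) (g f : affine) (x : R) :
  aff_eval env (aff_comp g f) x = aff_eval env g (aff_eval env f x).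
Proof. unfold aff_eval; cbn; ring. Qed.

Lemma push8_encode8 (env : uvar -> R) (e : sexp uvar) (a : sym) (l : list sym) :
  env (UH 0) = / 8 -> seval sg env e = code8 a ->
  aff_eval env (push8 e) (encode8 l) = encode8 (a :: l).
Proof. intros Haux He; unfold aff_eval; cbn; rewrite He, Haux; field. Qed.

Lemma pop8_encode8 (env : uvar -> R) (e : sexp uvar) (l : list sym) :
  seval sg env e = 2 * INR (rank8 l) -> aff_eval env (pop8 e) (encode8 l) = encode8 (tl l).
Proof. intros He; unfold aff_eval; cbn; rewrite He, encode8_tl; ring. Qed.

Lemma push4_gamma4 (env : uvar -> R) (e : sexp uvar) (a : sym) (l : list sym) :
  env (UH 1) = / 4 -> seval sg env e = symval a ->
  aff_eval env (push4 e) (gamma4 l) = gamma4 (a :: l).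
Proof. intros Haux He; unfold aff_eval; cbn; rewrite He, Haux; field. Qed.

Lemma pop4_gamma4 (env : uvar -> R) (e : sexp uvar) (l : list sym) :
  seval sg env e = symval (hd B0 l) -> aff_eval env (pop4 e) (gamma4 l) = gamma4 (tl l).
Proof. intros He; unfold aff_eval; cbn; rewrite He, gamma4_tl; ring. Qed.

Lemma IZR_code8Z (a : sym) : IZR (code8Z a) = code8 a.
Proof. unfold code8Z, code8; rewrite mult_IZR, <- INR_IZR_INZ; reflexivity. Qed.

Lemma IZR_symZ (a : sym) : IZR (symZ a) = symval a.
Proof. now destruct a. Qed.

Lemma update_regs (env : uvar -> R) (M : TM) (x : lcfg) :
  (forall j, env (UF j) = nth j (regs x) 0) -> (forall j, env (UH j) = nth j aux_vals 0) ->
  map (fun i => aff_eval env (update (delta M (lstate x) (hd B0 (lright x))) i)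
                  (nth i (regs x) 0)) [0; 1; 2; 3]%nat
  = regs (lstep M x).
Proof.
  intros Henv Haux.
  pose proof (Haux 0%nat) as H8; pose proof (Haux 1%nat) as H4; cbn in H8, H4.
  destruct (regs_readings env x Henv) as (_ & Hleft & Hright).
  pose proof (lead_code_eval env 1 (lleft x) (Henv 1%nat)) as Rl.
  pose proof (lead_code_eval env 2 (lvisited x) (Henv 2%nat)) as Rv.
  assert (Rl8 : seval sg env (sym_reading left_is code8Z) = code8 (hd B0 (lleft x)))
    by (erewrite sym_reading_eval; [apply IZR_code8Z|exact Hleft]).
  assert (Rl4 : seval sg env (sym_reading left_is symZ) = symval (hd B0 (lleft x)))
    by (erewrite sym_reading_eval; [apply IZR_symZ|exact Hleft]).
  assert (Rh4 : seval sg env (sym_reading right_is symZ) = symval (hd B0 (lright x)))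
    by (erewrite sym_reading_eval; [apply IZR_symZ|exact Hright]).
  assert (Hc8 : forall a, seval sg env (num (code8Z a)) = code8 a) by exact IZR_code8Z.
  assert (Hs4 : forall a, seval sg env (num (symZ a)) = symval a) by exact IZR_symZ.
  assert (Hq : forall q', aff_eval env (Aff (num 0) (num (Z.of_nat q'))) (INR (lstate x)) = INR q')
    by (intro q'; unfold aff_eval; cbn [seval slope offset num]; rewrite <- INR_IZR_INZ; ring).
  unfold lstep.
  destruct (delta M (lstate x) (hd B0 (lright x))) as [[q' a'] []];
    cbn [map update nth]; rewrite ?aff_eval_comp;
    unfold regs; cbn [nth lstate lleft lvisited lright linput app]; rewrite <- lright_tl, Hq.
  - rewrite (pop8_encode8 _ _ _ Rl), (pop8_encode8 _ _ _ Rv), (pop4_gamma4 _ _ _ Rh4).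
    rewrite (push8_encode8 _ _ a' _ H8 (Hc8 a')), (push8_encode8 _ _ _ _ H8 Rl8).
    rewrite (push4_gamma4 _ _ a' _ H4 (Hs4 a')), (push4_gamma4 _ _ _ _ H4 Rl4).
    reflexivity.
  - rewrite (push8_encode8 _ _ a' _ H8 (Hc8 a')), (pop8_encode8 _ _ _ Rv).
    rewrite (pop4_gamma4 _ _ _ Rh4); reflexivity.
  - rewrite (pop8_encode8 _ _ _ Rv), (pop4_gamma4 _ _ _ Rh4).
    rewrite (push8_encode8 _ _ a' _ H8 (Hc8 a')), (push4_gamma4 _ _ a' _ H4 (Hs4 a')).
    unfold aff_eval; cbn; rewrite Rmult_1_l, Rplus_0_r; reflexivity.
Qed.

Lemma ode_step_diag4 (E : nat -> affine) (x0 x1 x2 x3 : R) (hv : list R)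
  (N : nat) (ys : list R) :
  let fv := [x0; x1; x2; x3] in
  ode_step sg 4 (diag4 (fun i => SSub (slope (E i)) (num 1)))
    (map (fun i => offset (E i)) [0; 1; 2; 3]%nat) fv hv N ys
  = map (fun i => nth i fv 0 + blen_incr N *
                    (aff_eval (ode_env fv hv N ys) (E i) (nth i fv 0) - nth i fv 0))
      [0; 1; 2; 3]%nat.
Proof.
  unfold ode_step, aff_eval, ode_env, blen_incr;
    cbn [seq map nth rsum fold_right diag4 seval num].
  repeat (apply f_equal2; [ring|]); reflexivity.
Qed.

Lemma ode_step_lstep (M : TM) (x : lcfg) (N : nat) (ys : list R) :
  (lstate x < nQ M)%nat -> blen_incr N = 1 ->
  ode_step sg 4 (Amat M) (Bvec M) (regs x) aux_vals N ys = regs (lstep M x).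
Proof.
  intros Hq Hincr.
  set (env := ode_env (regs x) aux_vals N ys).
  assert (Henv : forall j, env (UF j) = nth j (regs x) 0) by reflexivity.
  assert (Haux : forall j, env (UH j) = nth j aux_vals 0) by reflexivity.
  destruct (regs_readings env x Henv) as (Hs & _ & Hr).
  unfold Amat, Bvec, regs at 1; rewrite ode_step_diag4, Hincr; fold env (regs x).
  rewrite <- (update_regs env M x Henv Haux).
  apply map_ext; intros i.
  unfold aff_eval; cbn [trans_aff slope offset].
  rewrite !(by_transition_eval env M (lstate x) (hd B0 (lright x))) by assumption; ring.
Qed.

Lemma ode_step_idle (M : TM) (x : lcfg) (N : nat) (ys : list R) :
  blen_incr N = 0 -> ode_step sg 4 (Amat M) (Bvec M) (regs x) aux_vals N ys = regs x.
Proof.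
  intros Hincr; unfold Amat, Bvec, regs at 1; rewrite ode_step_diag4, Hincr.
  cbn [map nth]; unfold regs; repeat (apply f_equal2; [ring|]); reflexivity.
Qed.

Lemma ode_iter_simulates (M : TM) (w : list sig13) (N : nat) :
  exists x,
    ode_iter sg 4 (init_funs M) aux_funs (Amat M) (Bvec M) N [gamma_word (map inj13 w)]
      = Some (regs x) /\
    (lstate x < nQ M)%nat /\ represents (Nat.iter (Nat.log2 N) (step M) (init_config M w)) x.
Proof.
  induction N as [|N (x & Hit & Hq & Hrep)].
  - exists (LCfg (q0 M) [] [] w); split; [|split; [apply q0_ok|]].
    + cbn; rewrite nat_const_eval, gamma_word_gamma4; reflexivity.
    + split; [reflexivity|split; intros n; [now destruct n|reflexivity]].
  - cbn [ode_iter]; rewrite Hit, aux_funs_eval.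
    destruct (blen_incr_cases N) as [[Hlog Hincr]|[Hlog Hincr]]; rewrite Hlog.
    + exists (lstep M x); rewrite ode_step_lstep by assumption.
      split; [reflexivity|split; [apply lstep_state_lt, Hq|apply step_represents, Hrep]].
    + exists x; rewrite ode_step_idle by assumption; auto.
Qed.

Lemma simulator_spec (M : TM) (w : list sig13) (N : nat) :
  exists x,
    simulator sg M [INR N; gamma_word (map inj13 w)] = Some (gamma4 (lright x)) /\
    represents (Nat.iter (Nat.log2 N) (step M) (init_config M w)) x.
Proof.
  destruct (ode_iter_simulates M w N) as (x & Hit & _ & Hrep).
  exists x; split; [|exact Hrep].
  unfold simulator, ode_fun; cbn [length Nat.eqb]; rewrite to_nat_opt_INR, Hit; reflexivity.
Qed.

End Evaluation.

(** * Membership in LDL° *)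

Lemma nat_const_LDL (sg : R -> R) (k : nat) : LDL sg 1 (nat_const k).
Proof.
  induction k as [|k IH]; [apply LDL_zero|].
  apply LDL_comp with (k := 2%nat); [apply LDL_add|reflexivity|].
  intros [|[|j]] Hj; [exact IH|apply LDL_one|lia].
Qed.

Lemma inv_pow2_LDL (sg : R -> R) (k : nat) : LDL sg 2 (inv_pow2 k).
Proof.
  induction k as [|k IH]; [apply LDL_one|].
  apply LDL_comp with (k := 1%nat); [apply LDL_half|reflexivity|].
  intros [|j] Hj; [exact IH|lia].
Qed.

Lemma select_deg {X : Type} (test F : X -> sexp uvar) (xs : list X) :
  (forall x, sdeg isF (test x) = 0%nat) -> (forall x, sdeg isF (F x) = 0%nat) ->
  sdeg isF (select test F xs) = 0%nat.
Proof.
  intros Ht HF; induction xs as [|x xs IH]; [reflexivity|].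
  cbn [select fold_right sdeg]; fold (select test F xs); rewrite Ht, HF, IH; reflexivity.
Qed.

Lemma by_transition_deg (M : TM) (E : nat * sym * move -> sexp uvar) :
  (forall t, sdeg isF (E t) = 0%nat) -> sdeg isF (by_transition M E) = 0%nat.
Proof.
  intros HE; apply select_deg; [reflexivity|intros q].
  apply select_deg; [intros []; reflexivity|auto].
Qed.

Lemma update_deg (t : nat * sym * move) (i : nat) :
  sdeg isF (slope (update t i)) = 0%nat /\ sdeg isF (offset (update t i)) = 0%nat.
Proof. destruct t as [[q a] []], i as [|[|[|[|i]]]]; split; reflexivity. Qed.

Lemma Amat_deg (M : TM) (r : list (sexp uvar)) (e : sexp uvar) :
  In r (Amat M) -> In e r -> sdeg isF e = 0%nat.
Proof.
  assert (Hd : forall i, sdeg isF (SSub (slope (trans_aff M i)) (num 1)) = 0%nat).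
  { intros i; cbn [sdeg trans_aff slope].
    rewrite by_transition_deg; [reflexivity|intros t; apply update_deg]. }
  intros Hr He; cbn in Hr.
  destruct Hr as [<-|[<-|[<-|[<-|[]]]]]; cbn in He;
    repeat destruct He as [<-|He]; try apply Hd; try reflexivity; contradiction.
Qed.

Lemma Bvec_deg (M : TM) (e : sexp uvar) : In e (Bvec M) -> sdeg isF e = 0%nat.
Proof.
  intros He; cbn in He; repeat destruct He as [<-|He]; try contradiction;
    apply by_transition_deg; intros t; apply update_deg.
Qed.

Lemma simulator_LDL (sg : R -> R) (M : TM) : LDL sg 2 (simulator sg M).
Proof.
  apply LDL_ode with (k := 2%nat); try reflexivity.
  - intros [|[|[|[|j]]]] Hj; cbn;
      [apply nat_const_LDL|apply LDL_zero|apply LDL_zero|apply LDL_proj; lia|lia].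
  - intros [|[|j]] Hj; cbn [nth aux_funs]; [apply inv_pow2_LDL|apply inv_pow2_LDL|lia].
  - intros r Hr; cbn in Hr; destruct Hr as [<-|[<-|[<-|[<-|[]]]]]; reflexivity.
  - apply Amat_deg.
  - apply Bvec_deg.
  - lia.
Qed.

Theorem mainTheorem9 :
  forall (sg : R -> R), IsSgBar sg ->
  forall (M : TM) (f : list sig13 -> list sig13) (T : nat -> nat),
    computes_in_time M f T ->
    exists ftilde : pfun,
      LDL sg 2 ftilde /\
      forall w : list sig13,
        ftilde [INR (2 ^ T (length w)); gamma_word (map inj13 w)]
        = Some (gamma_word (map inj13 (f w))).
Proof.
  intros sg (_ & _ & sg_one & sg_zero) M f T HM.
  exists (simulator sg M); split; [apply simulator_LDL|intros w].
  destruct (simulator_spec sg sg_one sg_zero M w (2 ^ T (length w))) as (x & -> & _ & _ & HR).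
  rewrite Nat.log2_pow2 in HR by lia.
  destruct (HM w) as [_ Hout].
  rewrite gamma_word_gamma4; f_equal; apply gamma4_nth_ext.
  intros n; rewrite <- HR, Hout; reflexivity.
Qed.
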